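(* Let $q$ be a prime power, $s,\ell$ positive integers, $\alpha,\beta\in\mathbb{F}_q^*$, let $r$ be the multiplicative order of $\beta$, and assume $q\equiv 1\pmod{r\ell}$. Let $\omega\in\mathbb{F}_q$ be a primitive $r\ell$-th root of unity with $\omega^\ell=\beta$, and for $k=0,1,\dots,\ell-1$ let $$\eta_k(y)=\prod_{\substack{0\le j\le \ell-1\\ j\ne k}}\frac{y-\omega^{1+jr}}{\omega^{1+kr}-\omega^{1+jr}}\in\mathbb{F}_q[y].$$ Let $\mathcal{C}$ be an ideal of $\mathcal{R}=\mathbb{F}_q[x,y]/\langle x^s-\alpha,\,y^\ell-\beta\rangle$. For $j=0,\dots,\ell-1$ let $I_j=\{f(x)\in\mathbb{F}_q[x]/\langle x^s-\alpha\rangle:\ \eta_j(y)f(x)\in\mathcal{C}\}$ (an ideal of $\mathbb{F}_q[x]/\langle x^s-\alpha\rangle$), and let $p_j(x)$ be the unique monic divisor of $x^s-\alpha$ with $I_j=\langle p_j(x)\rangle$. Then $$\mathcal{C}=\big\langle \eta_0(y)p_0(x),\ \eta_1(y)p_1(x),\ \dots,\ \eta_{\ell-1}(y)p_{\ell-1}(x)\big\rangle .$$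
   Context: A two-dimensional $(\alpha,\beta)$-constacyclic code of length $s.\ell$ over $\mathbb{F}_q$ is identified with an ideal of $\mathcal{R}$: an $s\times\ell$ array $(c_{i,j})$ corresponds to $\sum_{i,j}c_{i,j}x^iy^j$. The polynomials $\eta_0,\dots,\eta_{\ell-1}$ are the primitive central idempotents of $\mathbb{F}_q[y]/\langle y^\ell-\beta\rangle$, where $y^\ell-\beta=\prod_{k=0}^{\ell-1}(y-\omega^{1+kr})$. *)

From HB Require Import structures.
From mathcomp Require Import all_boot all_order all_algebra all_field.
Set Implicit Arguments. Unset Strict Implicit. Unset Printing Implicit Defensive.
Import GRing.Theory.
Local Open Scope ring_scope.

(* Bivariate polynomials F[x,y] are encoded as {poly {poly F}}:
   the outer variable is y, the coefficients are polynomials in x. *)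

Definition inX (F : fieldType) (f : {poly F}) : {poly {poly F}} := f%:P.
Definition inY (F : fieldType) (g : {poly F}) : {poly {poly F}} :=
  map_poly polyC g.

Definition eta_poly (F : fieldType) (w : F) (r l : nat) (k : 'I_l) : {poly F} :=
  \prod_(j < l | j != k)
     (('X - (w ^+ (1 + j * r))%:P) *
      ((w ^+ (1 + k * r) - w ^+ (1 + j * r))^-1)%:P).

Definition is_ideal (R : comNzRingType) (C : R -> Prop) : Prop :=
  [/\ C 0, (forall a b, C a -> C b -> C (a + b)) &
      (forall c a, C a -> C (c * a))].

(* An ideal C of R = F[x,y]/<x^s - alpha, y^l - beta> is represented by its
   preimage in F[x,y], i.e. an ideal of F[x,y] containing x^s-alpha and
   y^l-beta. *)
Definition ideal_of_R (F : fieldType) (s l : nat) (alpha beta : F)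
  (C : {poly {poly F}} -> Prop) : Prop :=
  [/\ is_ideal C, C (inX ('X^s - alpha%:P)) & C (inY ('X^l - beta%:P))].

From HB Require Import structures.
From mathcomp Require Import all_boot all_order all_algebra all_field.
Import GRing.Theory.
Set Implicit Arguments. Unset Strict Implicit. Unset Printing Implicit Defensive.
Local Open Scope ring_scope.

(* The eta_k are the Lagrange interpolation polynomials at the l distinct
   roots w^(1+kr) of y^l - beta.  Viewing P in F[x][y] as a polynomial in y
   over F[x], the difference P - sum_k eta_k(y) P(x, w^(1+kr)) vanishes at
   every root, hence is a multiple of y^l - beta; likewise
   eta_k(y) P = eta_k(y) P(x, w^(1+kr)) modulo y^l - beta.  So if P lies in
   C, each eta_k(y) P(x, w^(1+kr)) lies in C, i.e. p_k divides
   P(x, w^(1+kr)), and P is a combination of the eta_k(y) p_k(x). *)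

Lemma ideal_sum (R : comNzRingType) (C : R -> Prop) (I : Type) (r : seq I)
    (P : pred I) (G : I -> R) :
  is_ideal C -> (forall i, P i -> C (G i)) -> C (\sum_(i <- r | P i) G i).
Proof. by case=> C0 CD _ CG; apply: big_ind. Qed.

Lemma horner_inY (F : fieldType) (g : {poly F}) (c : F) :
  (inY g).[c%:P] = (g.[c])%:P.
Proof. exact: horner_map. Qed.

Lemma prod_XsubC_eq_XnsubC (F : fieldType) (l : nat) (beta : F)
    (a : 'I_l -> F) :
  (0 < l)%N -> injective a -> (forall k, a k ^+ l = beta) ->
  \prod_(k < l) ('X - (a k)%:P) = 'X^l - beta%:P.
Proof.
move=> l_gt0 a_inj a_root.
have := @all_roots_prod_XsubC F ('X^l - beta%:P) [seq a k | k <- enum 'I_l].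
rewrite size_map size_enum_ord size_XnsubC // lead_coefXnsubC // scale1r.
move=> -> //.
- by rewrite big_map big_enum.
- by apply/allP => _ /mapP [k _ ->]; rewrite rootE !hornerE a_root subrr.
- by rewrite uniq_rootsE map_inj_uniq ?enum_uniq.
Qed.

Section Lagrange.

Variables (F : fieldType) (l : nat) (a : 'I_l -> F).
Hypothesis a_inj : injective a.

Definition lagrange (k : 'I_l) : {poly F} :=
  \prod_(j < l | j != k) (('X - (a j)%:P) * ((a k - a j)^-1)%:P).

Lemma lagrange_horner j k : (lagrange j).[a k] = (j == k)%:R.
Proof.
rewrite /lagrange horner_prod; case: eqP => [<- | /eqP neq_jk].
  apply: big1 => i neq_ij; rewrite !hornerE divff // subr_eq0.
  by apply: contra neq_ij => /eqP/a_inj->.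
by rewrite (bigD1 k) 1?eq_sym //= !hornerE subrr !mul0r.
Qed.

Lemma horner_lagrange_inX j k (f : {poly F}) :
  (inY (lagrange j) * inX f).[(a k)%:P] = if j == k then f else 0.
Proof.
rewrite hornerM horner_inY lagrange_horner /inX hornerC.
by case: eqP; rewrite ?polyC1 ?mul1r ?polyC0 ?mul0r.
Qed.

Lemma vanishing_at_nodes (Q : {poly {poly F}}) :
  (forall k, Q.[(a k)%:P] = 0) ->
  exists c, Q = c * inY (\prod_(k < l) ('X - (a k)%:P)).
Proof.
move=> Q_root.
set nodes := map polyC (map a (enum 'I_l)).
have nodes_root : all (root Q) nodes.
  by apply/allP => _ /mapP [_ /mapP [k _ ->] ->]; apply/eqP.
have nodes_uniq : uniq_roots nodes.
  by rewrite map_uniq_roots map_inj_uniq ?enum_uniq.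
have [c ->] := uniq_roots_prod_XsubC nodes_root nodes_uniq.
exists c; rewrite /inY rmorph_prod /nodes !big_map.
by congr (_ * _); apply: eq_bigr => k _ /=; rewrite map_polyXsubC.
Qed.

Lemma interpolation_mod (P : {poly {poly F}}) :
  exists c, P = \sum_(j < l) inY (lagrange j) * inX P.[(a j)%:P]
                + c * inY (\prod_(k < l) ('X - (a k)%:P)).
Proof.
suff /vanishing_at_nodes [c Ec] :
    forall k, (P - \sum_(j < l) inY (lagrange j) * inX P.[(a j)%:P]).[(a k)%:P] = 0.
  by exists c; rewrite -Ec addrC subrK.
move=> k; rewrite hornerD hornerN horner_sum (bigD1 k) //=.
rewrite horner_lagrange_inX eqxx big1 ?addr0 ?subrr // => j /negbTE neq_jk.
by rewrite horner_lagrange_inX neq_jk.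
Qed.

Lemma lagrange_mul_mod j (P : {poly {poly F}}) :
  exists c, inY (lagrange j) * inX P.[(a j)%:P] = inY (lagrange j) * P
                + c * inY (\prod_(k < l) ('X - (a k)%:P)).
Proof.
suff /vanishing_at_nodes [c Ec] : forall k,
    (inY (lagrange j) * inX P.[(a j)%:P] - inY (lagrange j) * P).[(a k)%:P] = 0.
  by exists c; rewrite -Ec addrC subrK.
move=> k; rewrite hornerD hornerN horner_lagrange_inX hornerM horner_inY.
rewrite lagrange_horner; case: eqP => [-> | _].
  by rewrite polyC1 mul1r subrr.
by rewrite polyC0 mul0r subrr.
Qed.

End Lagrange.

(* [eta_poly w r k] is convertible to [lagrange (eta_node w r l) k]. *)
Definition eta_node (F : fieldType) (w : F) (r l : nat) : 'I_l -> F :=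
  fun k => w ^+ (1 + k * r).
Arguments eta_node {F} w r l.

Section EtaNodes.

Variables (F : fieldType) (r l : nat) (w : F).
Hypothesis w_prim : (r * l).-primitive_root w.

Lemma eta_node_inj : injective (eta_node w r l).
Proof.
have := prim_order_gt0 w_prim; rewrite muln_gt0 => /andP [r_gt0 _].
have lt_rl (k : 'I_l) : (k * r < r * l)%N by rewrite mulnC ltn_pmul2l.
move=> i j /eqP; rewrite /eta_node (eq_prim_root_expr w_prim) eqn_modDl.
by rewrite !modn_small // eqn_pmul2r // => /eqP/val_inj.
Qed.

Lemma prod_XsubC_eta_node (beta : F) : w ^+ l = beta ->
  \prod_(k < l) ('X - (eta_node w r l k)%:P) = 'X^l - beta%:P.
Proof.
move=> w_l; apply: prod_XsubC_eq_XnsubC eta_node_inj _.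
  by have := prim_order_gt0 w_prim; rewrite muln_gt0 => /andP [].
move=> k; rewrite /eta_node -exprM mulnDl mul1n exprD w_l -mulnA (mulnC k).
by rewrite exprM (prim_expr_order w_prim) expr1n mulr1.
Qed.

End EtaNodes.

Theorem theorem1 (F : finFieldType) (s l r : nat) (alpha beta w : F)
  (hs : (0 < s)%N) (hl : (0 < l)%N)
  (halpha : alpha != 0) (hbeta : beta != 0)
  (hr : r.-primitive_root beta)
  (hq : (#|F| = 1 %[mod r * l])%N)
  (hw : (r * l).-primitive_root w) (hwl : w ^+ l = beta)
  (C : {poly {poly F}} -> Prop)
  (hC : ideal_of_R s l alpha beta C)
  (p : 'I_l -> {poly F})
  (hpmonic : forall j, p j \is monic)
  (hpdiv : forall j, p j %| 'X^s - alpha%:P)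
  (hpI : forall j (f : {poly F}),
           C (inY (eta_poly w r j) * inX f) <-> p j %| f) :
  forall P : {poly {poly F}},
    C P <->
    exists (a : 'I_l -> {poly {poly F}}) (b c : {poly {poly F}}),
      P = \sum_(j < l) a j * (inY (eta_poly w r j) * inX (p j))
          + b * inX ('X^s - alpha%:P) + c * inY ('X^l - beta%:P).
Proof.
case: hC => C_ideal C_xs C_yl P; have [_ CD CM] := C_ideal.
rewrite -(prod_XsubC_eta_node hw hwl) in C_yl *.
set a := eta_node w r l.
split => [CP | [g [b [c ->]]]]; last first.
  apply: (CD); last exact: (CM).
  apply: (CD); last exact: (CM).
  by apply: ideal_sum => // j _; apply/(CM)/hpI.
have dvd_p j : p j %| P.[(a j)%:P].
  apply/hpI; have [c ->] := lagrange_mul_mod (eta_node_inj hw) j P.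
  by apply: (CD); apply: (CM).
have [c Ec] := interpolation_mod (eta_node_inj hw) P.
exists (fun j => inX (P.[(a j)%:P] %/ p j)), 0, c.
rewrite mul0r addr0 {1}Ec; congr (_ + _); apply: eq_bigr => j _.
by rewrite -{1}(divpK (dvd_p j)) /inX polyCM mulrCA.
Qed.
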